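(* Let $\mathcal{F}$ be a finite family of convex bodies in $\mathbb{R}^d$, let $p\in\mathbb{R}^d$ and let $k$ be a natural number with $k\le d+1$ and $k\le|\mathcal{F}|$. Assume that every point of $\mathbb{R}^d$ is at positive distance from at least one element of $\mathcal{F}$. Let $\mathcal{F}^*\subseteq\mathcal{F}$ be a subfamily of size $k$ such that the distance from $p$ to $\bigcap_{K\in\mathcal{F}^*}K$ is maximal among all subfamilies of $\mathcal{F}$ of size $k$. If $\bigcap_{K\in\mathcal{F}^*}K\neq\emptyset$, then the point $q$ of $\bigcap_{K\in\mathcal{F}^*}K$ closest to $p$ lies in $\bigcap_{K\in\mathcal{F}^*}\partial K$.
   Context: A convex body is a compact convex set with nonempty interior; $\partial K$ denotes the boundary of $K$; distances are Euclidean, with the distance to the empty set taken to be $\infty$. *)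

From HB Require Import structures.
From mathcomp Require Import all_boot all_order all_algebra.
From mathcomp Require Import all_classical all_reals all_analysis.
Set Implicit Arguments. Unset Strict Implicit. Unset Printing Implicit Defensive.
Import Order.TTheory GRing.Theory Num.Theory.
Import numFieldNormedType.Exports.
Local Open Scope classical_set_scope.
Local Open Scope ring_scope.

(* Euclidean norm on R^d (the library's norm on matrices is the max norm,
   which induces the same topology but not the Euclidean distance). *)
Definition eucl_norm {R : realType} {d : nat} (v : 'rV[R]_d) : R :=
  Num.sqrt (\sum_(i < d) (v ord0 i) ^+ 2).

(* Euclidean distance from a point to a set, in the extended reals;
   the infimum over the empty set is +oo. *)
Definition dist_set {R : realType} {d : nat} (p : 'rV[R]_d) (A : set 'rV[R]_d)
  : \bar R :=
  ereal_inf [set (eucl_norm (p - a))%:E | a in A].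

Definition convex_set_rV {R : realType} {d : nat} (K : set 'rV[R]_d) : Prop :=
  forall x y (t : R), K x -> K y -> 0 <= t <= 1 -> K (t *: x + (1 - t) *: y).

Definition convex_body {R : realType} {d : nat} (K : set 'rV[R]_d) : Prop :=
  compact K /\ convex_set_rV K /\ (interior K !=set0).

Definition boundary {R : realType} {d : nat} (K : set 'rV[R]_d) : set 'rV[R]_d :=
  closure K `\` interior K.

Definition subfam_inter {R : realType} {d n : nat}
  (K : 'I_n -> set 'rV[R]_d) (S : {set 'I_n}) : set 'rV[R]_d :=
  [set x | forall i, i \in S -> K i x].

From HB Require Import structures.
From mathcomp Require Import all_boot all_order all_algebra.
From mathcomp Require Import all_classical all_reals all_analysis.
From mathcomp Require Import ring lra.
Set Implicit Arguments. Unset Strict Implicit. Unset Printing Implicit Defensive.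
Import Order.TTheory GRing.Theory Num.Theory.
Import numFieldNormedType.Exports.
Local Open Scope classical_set_scope.
Local Open Scope ring_scope.

(* If [q] were interior to some [K j] with [j] in [F*], replace [K j] by a
   body [K m] avoiding [q] (one exists by hypothesis).  Every point [x] of
   the remaining [k - 1] bodies satisfies
   [|p - x|^2 >= |p - q|^2 + |x - q|^2 / 2]: otherwise moving from [q] a
   little towards [x] stays inside all of [F*] (convexity, and [q] is
   interior to [K j]) and gets closer to [p].  Points of [K m] are at least
   some [r > 0] away from [q], so the new intersection is strictly farther
   from [p] than [q], contradicting the maximality of [F*]. *)

Lemma closed_far_from {R : numFieldType} {V : normedModType R} (A : set V) x :
  closed A -> ~ A x -> exists2 r : R, 0 < r & forall y, A y -> r <= `|y - x|.
Proof.
move=> Acl Ax; have : nbhs x (~` A).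
  by apply: open_nbhs_nbhs; split => //; exact: closed_openC.
move=> /nbhs_normP [r r0 ballNA]; exists r => // y Ay.
rewrite distrC real_leNgt ?normr_real ?(gtr0_real r0) //.
by apply/negP => /ballNA.
Qed.

Lemma card_setU1D1 (T : finType) (S : {set T}) a b :
  b \in S -> a \notin S -> #|a |: (S :\ b)| = #|S|.
Proof.
by move=> bS aS; rewrite cardsU1 (cardsD1 b S) bS in_setD1 (negbTE aS) andbF.
Qed.

Section EuclideanSquares.
Variables (R : realType) (d : nat).
Implicit Types (u v p q x : 'rV[R]_d) (A : set 'rV[R]_d).

Definition eucl_sqnorm v : R := \sum_(i < d) v ord0 i ^+ 2.

Lemma eucl_sqnorm_ge0 v : 0 <= eucl_sqnorm v.
Proof. by apply: sumr_ge0 => i _; exact: sqr_ge0. Qed.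

Lemma eucl_norm0 : eucl_norm (0 : 'rV[R]_d) = 0.
Proof.
by rewrite /eucl_norm big1 ?sqrtr0 // => i _; rewrite mxE expr0n.
Qed.

Lemma ler_eucl_norm u v :
  (eucl_norm u <= eucl_norm v) = (eucl_sqnorm u <= eucl_sqnorm v).
Proof. by rewrite /eucl_norm ler_sqrt ?eucl_sqnorm_ge0. Qed.

Lemma mx_norm_sqr_le_eucl_sqnorm v : `|v| ^+ 2 <= eucl_sqnorm v.
Proof.
suff : `|v| <= Num.sqrt (eucl_sqnorm v).
  by rewrite -ler_sqr ?nnegrE ?sqrtr_ge0 // sqr_sqrtr ?eucl_sqnorm_ge0.
rewrite [`|v|]mx_normrE; apply: bigmax_le; first exact: sqrtr_ge0.
move=> [a b] _ /=; rewrite (ord1 a) -sqrtr_sqr ler_sqrt ?eucl_sqnorm_ge0 //.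
by rewrite /eucl_sqnorm (bigD1 b) //= lerDl sumr_ge0 // => i _; exact: sqr_ge0.
Qed.

Lemma sqr_le_eucl_sqnorm (r : R) v :
  0 <= r -> r <= `|v| -> r ^+ 2 <= eucl_sqnorm v.
Proof.
move=> r0 rv; apply: le_trans (mx_norm_sqr_le_eucl_sqnorm v).
by rewrite ler_pXn2r ?nnegrE // (le_trans r0).
Qed.

Lemma eucl_sqnorm_segment p q x (t : R) :
  eucl_sqnorm (p - (t *: x + (1 - t) *: q)) =
  (1 - t) * eucl_sqnorm (p - q) + t * eucl_sqnorm (p - x)
    - t * (1 - t) * eucl_sqnorm (x - q).
Proof.
rewrite /eucl_sqnorm !mulr_sumr -big_split -sumrB /=; apply: eq_bigr => i _.
by rewrite !mxE; ring.
Qed.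

Lemma eucl_sqnorm_gap_of_segment p q x (t : R) :
  0 < t <= 1 / 2 ->
  eucl_sqnorm (p - q) <= eucl_sqnorm (p - (t *: x + (1 - t) *: q)) ->
  eucl_sqnorm (p - q) + eucl_sqnorm (x - q) / 2 <= eucl_sqnorm (p - x).
Proof.
move=> /andP [t0 t12]; rewrite eucl_sqnorm_segment => closer.
have margin : 0 <= t * eucl_sqnorm (x - q) * (1 / 2 - t).
  by rewrite !mulr_ge0 ?eucl_sqnorm_ge0 ?subr_ge0 // ltW.
have : 0 <= t * (eucl_sqnorm (p - x) - eucl_sqnorm (p - q)
                 - eucl_sqnorm (x - q) / 2) by lra.
by rewrite pmulr_rge0 //; lra.
Qed.

Lemma dist_set_le_eucl_norm p A a :
  A a -> (dist_set p A <= (eucl_norm (p - a))%:E)%E.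
Proof. by move=> Aa; apply: ereal_inf_lbound; exists a. Qed.

Lemma dist_set_gt0_notin x A : (0 < dist_set x A)%E -> ~ A x.
Proof.
move=> + Ax; apply/negP; rewrite -leNgt.
by rewrite (le_trans (dist_set_le_eucl_norm x Ax)) // subrr eucl_norm0.
Qed.

Lemma le_dist_set p A (r : R) :
  (forall a, A a -> r <= eucl_norm (p - a)) -> (r%:E <= dist_set p A)%E.
Proof. by move=> rA; apply: le_ereal_inf_tmp => _ [a Aa <-]; rewrite lee_fin rA. Qed.

Lemma eucl_norm_lt_dist_set p q A (r : R) : 0 < r ->
  (forall a, A a -> eucl_sqnorm (p - q) + r ^+ 2 / 2 <= eucl_sqnorm (p - a)) ->
  ((eucl_norm (p - q))%:E < dist_set p A)%E.
Proof.
move=> r0 rA; set s := eucl_sqnorm (p - q) + r ^+ 2 / 2.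
have s0 : 0 < s by rewrite ltr_wpDl ?eucl_sqnorm_ge0 // divr_gt0 // exprn_gt0.
apply: (@lt_le_trans _ _ (Num.sqrt s)%:E).
  by rewrite lte_fin /eucl_norm ltr_sqrt // ltrDl divr_gt0 // exprn_gt0.
by apply: le_dist_set => a Aa; rewrite /eucl_norm ler_sqrt ?eucl_sqnorm_ge0 ?rA.
Qed.

Lemma nearest_interior_eucl_sqnorm_gap (C L : set 'rV[R]_d) p q :
  convex_set_rV C -> C q -> interior L q ->
  (forall y, C y -> L y -> eucl_sqnorm (p - q) <= eucl_sqnorm (p - y)) ->
  forall x, C x ->
  eucl_sqnorm (p - q) + eucl_sqnorm (x - q) / 2 <= eucl_sqnorm (p - x).
Proof.
move=> Ccvx Cq /nbhs_normP [e e0 ballL] qmin x Cx.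
set c := `|q - x|; have c0 : 0 <= c := normr_ge0 _.
set t := Num.min (1 / 2) (e / (2 * (c + 1))).
have t0 : 0 < t by rewrite lt_min !divr_gt0 // mulr_gt0 // ltr_pwDr.
have t12 : t <= 1 / 2 by rewrite ge_min lexx.
have tc : t * c < e.
  have : t <= e / (2 * (c + 1)) by rewrite ge_min lexx orbT.
  rewrite ler_pdivlMr ?mulr_gt0 ?ltr_pwDr //; nra.
apply: (@eucl_sqnorm_gap_of_segment _ _ _ t); first by rewrite t0.
apply: qmin; first by apply: Ccvx => //; rewrite (ltW t0) /= (le_trans t12) //; lra.
apply: ballL => /=.
have -> : q - (t *: x + (1 - t) *: q) = t *: (q - x).
  by apply/rowP => a; rewrite !mxE; ring.
by rewrite mx_normZ ger0_norm // ltW.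
Qed.

End EuclideanSquares.

Section SubfamilyIntersection.
Variables (R : realType) (d n : nat) (K : 'I_n -> set 'rV[R]_d).
Implicit Types (S : {set 'I_n}) (i j m : 'I_n).

Lemma convex_subfam_inter S :
  (forall i, convex_set_rV (K i)) -> convex_set_rV (subfam_inter K S).
Proof. by move=> Kcvx x y t Sx Sy t01 i iS; apply: Kcvx => //; [exact: Sx | exact: Sy]. Qed.

Lemma subfam_inter_setD1 S j x :
  j \in S -> subfam_inter K (S :\ j) x -> K j x -> subfam_inter K S x.
Proof.
move=> jS Sx Kjx i iS; case: (eqVneq i j) => [-> // | ij].
by apply: Sx; rewrite in_setD1 ij.
Qed.

Lemma subfam_inter_setU1D1 S m j x :
  subfam_inter K (m |: (S :\ j)) x -> K m x /\ subfam_inter K (S :\ j) x.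
Proof. by move=> Sx; split=> [|i iS]; apply: Sx; rewrite ?setU11 ?setU1r. Qed.

End SubfamilyIntersection.

Theorem proposition13p1 (R : realType) (d n k : nat)
  (K : 'I_n -> set 'rV[R]_d) (p : 'rV[R]_d) (Sstar : {set 'I_n}) :
  injective K ->
  (forall i, convex_body (K i)) ->
  (k <= d.+1)%N -> (k <= n)%N ->
  (forall x : 'rV[R]_d, exists i, (0 < dist_set x (K i))%E) ->
  #|Sstar| = k ->
  (forall S : {set 'I_n}, #|S| = k ->
     (dist_set p (subfam_inter K S) <= dist_set p (subfam_inter K Sstar))%E) ->
  subfam_inter K Sstar !=set0 ->
  forall q : 'rV[R]_d, subfam_inter K Sstar q ->
    (eucl_norm (p - q))%:E = dist_set p (subfam_inter K Sstar) ->
    forall i, i \in Sstar -> boundary (K i) q.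
Proof.
move=> _ Kbody _ _ far cardS Smax _ q Sq qnearest j jS.
split; first exact: subset_closure (Sq j jS).
move=> qint.
have [m /dist_set_gt0_notin Kmq] := far q.
have mS : m \notin Sstar by apply/negP => /Sq.
have Kmcl : closed (K m) := compact_closed (@norm_hausdorff R _) (Kbody m).1.
have [r r0 Kmr] := closed_far_from Kmcl Kmq.
have Sgap : forall x, subfam_inter K (Sstar :\ j) x ->
    eucl_sqnorm (p - q) + eucl_sqnorm (x - q) / 2 <= eucl_sqnorm (p - x).
  apply: nearest_interior_eucl_sqnorm_gap qint _.
  - by apply: convex_subfam_inter => i; exact: (Kbody i).2.1.
  - by move=> i /setD1P [_ /Sq].
  - move=> y Sy Kjy; rewrite -ler_eucl_norm -lee_fin qnearest.
    exact/dist_set_le_eucl_norm/(subfam_inter_setD1 jS Sy Kjy).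
have := Smax _ (etrans (card_setU1D1 jS mS) cardS).
apply/negP; rewrite -ltNge -qnearest; apply: (eucl_norm_lt_dist_set r0).
move=> x /subfam_inter_setU1D1 [Kmx Sx]; apply: le_trans (Sgap x Sx).
rewrite lerD2l ler_pM2r ?invr_gt0 //.
by apply: sqr_le_eucl_sqnorm; [exact: ltW | exact: Kmr].
Qed.
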